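(* Let $A$ be a VPA with $\emptyset\subsetneq\mathcal L(A)\subsetneq\Sigma^*$ and assume $S_0$ is bounded. For each $\tau\in Q^Q$ let $R_\tau$ be a bounded overapproximation of $\tau^{-1}S_1$, and let $\mathrm{RegFlat}=R_0(\Sigma_c\cup R_1)^*$ where $R_1=\bigcup_{\tau\in Q^Q}\tau R_\tau$ and $R_0=\bigcup_{\tau\in Q^Q}\mathsf{Suf}(R_\tau)$. If $\mathrm{RegFlat}$ contains a linear fooling set for $\nu_f$, then $\mathrm{Flat}$ also contains a linear fooling set for $\nu_f$.
   Context: VPA $A=(Q,\Sigma,\Gamma,\bot,q_0,\delta,F)$ over a pushdown alphabet $\Sigma=\Sigma_c\cup\Sigma_r\cup\Sigma_{\mathit{int}}$ ($\Sigma_c,\Sigma_r\ne\emptyset$), with configurations $\alpha q$ ($\alpha\in\bot(\Gamma\setminus\{\bot\})^*$), call letters pushing via $\delta_c:Q\times\Sigma_c\to(\Gamma\setminus\{\bot\})\times Q$, internal letters via $\delta_{\mathit{int}}:Q\times\Sigma_{\mathit{int}}\to Q$, return letters popping the top $\gamma\ne\bot$ via $\delta_r:Q\times\Sigma_r\times\Gamma\to Q$ (or reading $\bot$ without popping). $\delta(c,w)$ is the configuration reached; $\mathcal L(c)$ the words leading from $c$ to a state in $F$. $W$: well-matched words (smallest set containing $\varepsilon$, $\Sigma_{\mathit{int}}$, closed under concatenation and $w\mapsto awb$, $a\in\Sigma_c$, $b\in\Sigma_r$); $D$: descending words (products of well-matched words and return letters); $\varphi:W\to Q^Q$ with $\delta(\alpha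 p,w)=\alpha\varphi(w)(p)$. $\mathrm{rConf}$: configurations reachable from $\bot q_0$; $\mathsf{rep}(c)$: length-lexicographically least (for fixed linear orders on $\Gamma,Q$) $c'\in\mathrm{rConf}$ with $\mathcal L(c')=\mathcal L(c)$; $\nu_A(w)=\mathsf{rep}(\delta(\bot q_0,w))$. For $w=a_1\cdots a_n\in D$, $\nu_A(a_i\cdots a_n)=\bot q_i$; $\sigma_0(w)=q_1\cdots q_n$; for nonempty $w\in W$, $\sigma_1(w)=\varphi(w)q_2\cdots q_n$. $S_0=\sigma_0(D)$, $S_1=\sigma_1(W\setminus\{\varepsilon\})$. $\Sigma_f=\Sigma_c\cup Q\cup Q^Q$ (disjoint); $\mathrm{AllFlat}=Q^*(\Sigma_c\cup Q^QQ^* )^*$ with unique factorization $s_0s_1\cdots s_m$, $s_0\in Q^*$, $s_i\in\Sigma_c\cup Q^QQ^*$. $t_f$: $t_f(\varepsilon)=\bot q_0$, $t_f(q_1\cdots q_n)=\bot q_1$ ($n\ge1$), $t_f(s_0\cdots s_m)=\delta(t_f(s_0\cdots s_{m-1}),s_m)$ if $s_m\in\Sigma_c$, and $=\alpha\tau(q)$ if $s_m=\tau q_2\cdots q_k$ and $t_f(s_0\cdots s_{m-1})=\alpha q$. $\nu_f=\mathsf{rep}\circ t_f$ with domain $\mathrm{AllFlat}$. $\mathrm{Flat}=S_0(\Sigma_c\cup S_1)^*$. Bounded language: subset of $w_1^*\cdots w_k^*$. $\tau^{-1}S_1=\{x:\tau x\in S_1\}$. $\Psi(a_1\cdots a_n)=\{(a_i,n-i+1)\}$,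 $\Psi(K)=\bigcup_{w\in K}\Psi(w)$. A bounded overapproximation of a bounded context-free $K$ is a bounded regular $R\supseteq K$ with $\{|w|:w\in K\}=\{|w|:w\in R\}$ and $\Psi(K)=\Psi(R)$. $\mathsf{Suf}(L)$: all suffixes of words of $L$. A linear fooling scheme for a partial function $t$ on $\Sigma_f^*$ is $(u_2,v_2,u,v,Z)$ with $u_2$ a suffix of $u$, $v_2$ a suffix of $v$, $|u_2|=|v_2|$, $\{u_2,v_2\}\{u,v\}^*Z\subseteq\mathrm{dom}(t)$, and for each $n$ some $z_n\in Z$ with $|z_n|\in O(n)$ and $t(u_2wz_n)\ne t(v_2wz_n)$ for all $w\in\{u,v\}^{\le n}$; the set $\{u_2,v_2\}\{u,v\}^*Z$ is a linear fooling set, and a language contains one if such a set is a subset of it. *)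

From mathcomp Require Import all_boot.
Set Implicit Arguments. Unset Strict Implicit. Unset Printing Implicit Defensive.

Inductive letter (Ac Ar Ai : Type) := Call of Ac | Ret of Ar | Int of Ai.
Arguments Call {Ac Ar Ai} _.
Arguments Ret {Ac Ar Ai} _.
Arguments Int {Ac Ar Ai} _.

(* A deterministic VPA.  [G] is Gamma \ {bot}; the bottom symbol bot is
   represented by [None] in [option G].  A configuration  alpha q  with
   alpha = bot g1 ... gk  is represented by ([:: g1; ...; gk], q)
   (bottom first, top last). *)
Record vpa (Ac Ar Ai Q G : finType) := Vpa {
  q0 : Q;
  dc : Q -> Ac -> G * Q;
  di : Q -> Ai -> Q;
  dr : Q -> Ar -> option G -> Q;        (* delta_r ; None = bot (no pop) *)
  fin : pred Q
}.

Fixpoint lexle (s t : seq nat) : bool :=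
  match s, t with
  | [::], _ => true
  | _ :: _, [::] => false
  | x :: s', y :: t' => (x < y) || ((x == y) && lexle s' t')
  end.

Definition bounded (T : Type) (L : seq T -> Prop) : Prop :=
  exists ws : seq (seq T), forall x, L x ->
    exists ns : seq nat, size ns = size ws /\
      x = flatten (map (fun p : nat * seq T => flatten (nseq p.1 p.2)) (zip ns ws)).

Definition regular (T : finType) (L : seq T -> Prop) : Prop :=
  exists (S : finType) (s0 : S) (d : S -> T -> S) (F : pred S),
    forall x, L x <-> F (foldl d s0 x).

(* p \in Psi(x), with Psi(a_1...a_n) = {(a_i, n-i+1)} *)
Fixpoint inPsi (T : Type) (p : T * nat) (x : seq T) : Prop :=
  match x with
  | [::] => False
  | a :: x' => p = (a, (size x').+1) \/ inPsi p x'
  end.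

Definition bounded_overapprox (T : finType) (K R : seq T -> Prop) : Prop :=
  [/\ bounded R, regular R, (forall x, K x -> R x),
      (forall n, (exists x, K x /\ size x = n) <-> (exists x, R x /\ size x = n))
    & (forall p, (exists x, K x /\ inPsi p x) <-> (exists x, R x /\ inPsi p x))].

Definition Suf (T : Type) (L : seq T -> Prop) : seq T -> Prop :=
  fun x => exists y, L (y ++ x).

Definition blocks (T : Type) (u v : seq T) (bs : seq bool) : seq T :=
  flatten (map (fun b : bool => if b then u else v) bs).

Definition fool_set (T : Type) (u2 v2 u v : seq T) (Z : seq T -> Prop) : seq T -> Prop :=
  fun x => exists y bs z, (y = u2 \/ y = v2) /\ Z z /\ x = y ++ blocks u v bs ++ z.

(* Linear fooling scheme (u2,v2,u,v,Z) for a partial function t, given by its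
   graph [t : seq T -> C -> Prop] (t x c  <->  x \in dom t /\ t(x) = c). *)
Definition lin_fooling_scheme (T C : Type) (t : seq T -> C -> Prop)
    (u2 v2 u v : seq T) (Z : seq T -> Prop) : Prop :=
  [/\ (exists p, u = p ++ u2), (exists p, v = p ++ v2), size u2 = size v2,
      (forall x, fool_set u2 v2 u v Z x -> exists c, t x c)
    & exists zs : nat -> seq T,
        [/\ (forall n, Z (zs n)),
            (exists K N, forall n, N <= n -> size (zs n) <= K * n)
          & forall n bs, size bs <= n ->
              exists c1 c2, [/\ t (u2 ++ blocks u v bs ++ zs n) c1,
                                t (v2 ++ blocks u v bs ++ zs n) c2 & c1 <> c2]]].

Definition contains_lfs (T C : Type) (L : seq T -> Prop) (t : seq T -> C -> Prop) : Prop :=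
  exists u2 v2 u v Z, lin_fooling_scheme t u2 v2 u v Z /\
    (forall x, fool_set u2 v2 u v Z x -> L x).

Definition flat (Ac Q : finType) : finType := (Ac + (Q + {ffun Q -> Q}))%type.
Definition FC (Ac Q : finType) (a : Ac) : flat Ac Q := inl a.
Definition FQ (Ac Q : finType) (q : Q) : flat Ac Q := inr (inl q).
Definition FT (Ac Q : finType) (t : {ffun Q -> Q}) : flat Ac Q := inr (inr t).
Arguments FC {Ac Q} a.
Arguments FQ {Ac Q} q.
Arguments FT {Ac Q} t.

Inductive fseg (Ac Q : finType) := SCall of Ac | STau of {ffun Q -> Q} & seq Q.
Arguments SCall {Ac Q} _.
Arguments STau {Ac Q} _ _.
Definition segw (Ac Q : finType) (s : fseg Ac Q) : seq (flat Ac Q) :=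
  match s with SCall a => [:: FC a] | STau t qs => FT t :: map FQ qs end.

Definition R1 (Ac Q : finType) (R : {ffun Q -> Q} -> seq (flat Ac Q) -> Prop) :
  seq (flat Ac Q) -> Prop := fun x => exists t y, R t y /\ x = FT t :: y.
Definition R0 (Ac Q : finType) (R : {ffun Q -> Q} -> seq (flat Ac Q) -> Prop) :
  seq (flat Ac Q) -> Prop := fun x => exists t, Suf (R t) x.
Definition RegFlat (Ac Q : finType) (R : {ffun Q -> Q} -> seq (flat Ac Q) -> Prop) :
  seq (flat Ac Q) -> Prop :=
  fun x => exists x0 ys, [/\ R0 R x0,
             (forall y, y \in ys -> (exists a, y = [:: FC a]) \/ R1 R y)
           & x = x0 ++ flatten ys].

Section VPAdefs.
Variables (Ac Ar Ai Q G : finType) (A : vpa Ac Ar Ai Q G).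
Local Notation letter := (letter Ac Ar Ai).
Local Notation conf := (seq G * Q)%type.

Definition step (c : conf) (x : letter) : conf :=
  let: (s, q) := c in
  match x with
  | Call a => let: (g, q') := dc A q a in (rcons s g, q')
  | Int i => (s, di A q i)
  | Ret b => match rev s with
             | [::] => (s, dr A q b None)
             | g :: r => (rev r, dr A q b (Some g))
             end
  end.

Definition run (c : conf) (w : seq letter) : conf := foldl step c w.
Definition init : conf := ([::], q0 A).
Definition acc (c : conf) (w : seq letter) : bool := fin A (run c w).2.
Definition same_lang (c c' : conf) : Prop := forall w, acc c w = acc c' w.
Definition rConf (c : conf) : Prop := exists w, run init w = c.

Inductive wm : seq letter -> Prop :=
| wm_nil : wm [::]
| wm_int i : wm [:: Int i]
| wm_cat u v : wm u -> wm v -> wm (u ++ v)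
| wm_nest a u b : wm u -> wm (Call a :: rcons u (Ret b)).

Inductive desc : seq letter -> Prop :=
| desc_nil : desc [::]
| desc_wm u v : wm u -> desc v -> desc (u ++ v)
| desc_ret b v : desc v -> desc (Ret b :: v).

(* phi(w) for w well-matched: delta(alpha p, w) = alpha phi(w)(p) *)
Definition phi (w : seq letter) : {ffun Q -> Q} := [ffun p => (run ([::], p) w).2].

(* fixed linear orders on Gamma and Q, given by injective ranks *)
Variables (rG : G -> nat) (rQ : Q -> nat).
Definition conf_code (c : conf) : seq nat := rcons (map rG c.1) (rQ c.2).
Definition conf_le (c c' : conf) : bool :=
  (size c.1 < size c'.1) ||
  ((size c.1 == size c'.1) && lexle (conf_code c) (conf_code c')).

(* rep(c) = c'  (graph of the partial function rep) *)
Definition is_rep (c c' : conf) : Prop :=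
  [/\ rConf c', same_lang c' c &
      forall c'', rConf c'' -> same_lang c'' c -> conf_le c' c''].

Definition nuA (w : seq letter) (c' : conf) : Prop := is_rep (run init w) c'.

Definition sigma0 (w : seq letter) (qs : seq Q) : Prop :=
  size qs = size w /\
  forall i, i < size w -> nuA (drop i w) ([::], nth (q0 A) qs i).

Definition S0 : seq Q -> Prop := fun x => exists w, desc w /\ sigma0 w x.

Definition S1 : seq (flat Ac Q) -> Prop :=
  fun x => exists w qs, [/\ wm w, w <> [::], sigma0 w qs &
                            x = FT (phi w) :: map FQ (behead qs)].

Definition tauinvS1 (t : {ffun Q -> Q}) : seq (flat Ac Q) -> Prop :=
  fun x => S1 (FT t :: x).

Definition Flat : seq (flat Ac Q) -> Prop :=
  fun x => exists x0 ys, [/\ S0 x0,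
             (forall y, y \in ys -> (exists a, y = [:: FC a]) \/ S1 y)
           & x = map FQ x0 ++ flatten ys].

Definition tf_seg (c : conf) (s : fseg Ac Q) : conf :=
  match s with
  | SCall a => step c (Call a)
  | STau t _ => (c.1, t c.2)
  end.
Definition tf (qs : seq Q) (ss : seq (fseg Ac Q)) : conf :=
  foldl tf_seg (if qs is q1 :: _ then ([::], q1) else init) ss.

(* graph of nu_f = rep o t_f, with domain (contained in) AllFlat *)
Definition nu_f (x : seq (flat Ac Q)) (c : conf) : Prop :=
  exists qs ss, x = map FQ qs ++ flatten (map (@segw Ac Q) ss) /\ is_rep (tf qs ss) c.

End VPAdefs.

(* The value of [nu_f] on a flat word only depends on its skeleton: its first letter if that
   is a state, and its letters that are not states.  A word of [RegFlat] splits into a block of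
   states followed by pieces, each a call letter or some [tau] followed by a word of [R tau].

   If [u] or [v] contains a letter that is not a state, cutting the scheme at such a letter
   makes its blocks and tails unions of pieces.  A piece [tau r] can be replaced by [tau y] with
   [y] in [tau^-1 S1] of the same length; the piece straddling the start of the new [u2] (or
   [v2]) is replaced, using the Psi condition, by one whose tail from there on is a suffix of a
   word of [tau^-1 S1], hence in [S0].  Skeletons and lengths are preserved, which gives a
   linear fooling scheme inside [Flat].

   If [u] and [v] only contain states, every [u2 w] with [w] in [{u, v}^*] is a factor of a word
   of some [R tau], but the bounded language of these factors only has polynomially many words
   of each length, while the [u2 w] give exponentially many; the case [u2 = v2] contradicts
   the fooling property directly. *)

From mathcomp Require Import all_boot zify.
From Stdlib Require Import ClassicalEpsilon.
Set Implicit Arguments. Unset Strict Implicit. Unset Printing Implicit Defensive.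

Section Words.
Variable T : Type.
Implicit Types (w x y P S : seq T) (ws : seq (seq T)).

Lemma cat_eq_cat x y P S : x ++ y = P ++ S -> size x <= size P ->
  exists m, P = x ++ m /\ y = m ++ S.
Proof.
elim: x P => [|a x IH] P e hs; first by exists P.
by case: P e hs => [|b P] //= [-> /IH h] /h [m [-> ->]]; exists m.
Qed.

Lemma catl_inj x y y' : x ++ y = x ++ y' -> y = y'.
Proof. by move/(congr1 (drop (size x))); rewrite !drop_size_cat. Qed.

Lemma cat_eq_size_cat x x' y y' : x ++ y = x' ++ y' -> size y = size y' -> x = x' /\ y = y'.
Proof.
move=> e hs; have hx : size x = size x'.
  by have := congr1 size e; rewrite !size_cat hs => /addIn.
split; first by have := congr1 (take (size x)) e; rewrite take_size_cat // hx take_size_cat.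
by have := congr1 (drop (size x)) e; rewrite drop_size_cat // hx drop_size_cat.
Qed.

Lemma flatten_split (ps : seq (seq T)) P S : flatten ps = P ++ S -> 0 < size P ->
  exists ps1 p1 p2 ps2, [/\ ps = ps1 ++ (p1 ++ p2) :: ps2, 0 < size p1,
                             P = flatten ps1 ++ p1 & S = p2 ++ flatten ps2].
Proof.
elim: ps P => [|p ps IH] P /= e hP; first by case: P hP e.
case: (leqP (size P) (size p)) => hs.
  by have [m [-> ->]] := cat_eq_cat (esym e) hs; exists [::], P, m, ps.
have [P' [eP e']] := cat_eq_cat e (ltnW hs).
have hP' : 0 < size P' by move: hs; rewrite eP size_cat -ltn_subLR // subnn.
have [ps1 [p1 [p2 [ps2 [-> hp1 eP' ->]]]]] := IH _ e' hP'.
by exists (p :: ps1), p1, p2, ps2; rewrite eP eP' catA.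
Qed.

Lemma inPsiP (p : T * nat) x :
  inPsi p x <-> exists x1 x2, x = x1 ++ p.1 :: x2 /\ p.2 = (size x2).+1.
Proof.
case: p => b k /=; elim: x => [|a x IH] /=; first by split=> // [[[|? ?] [? []]]].
split=> [[[-> ->]|/IH [x1 [x2 [-> ->]]]]|[[|c x1] [x2 [[ea ex] ek]]]].
- by exists [::], x.
- by exists (a :: x1), x2.
- by left; rewrite ea ex ek.
- by right; apply/IH; exists x1, x2.
Qed.

Lemma power_suffix w n : 0 < n -> exists p, flatten (nseq n w) = p ++ w.
Proof.
case: n => // n _; elim: n => [|n [p /= e]]; first by exists [::]; rewrite /= cats0.
by exists (w ++ p); rewrite /= e catA.
Qed.

Lemma all_power (a : pred T) w n : all a w -> all a (flatten (nseq n w)).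
Proof. by move=> hw; elim: n => //= n IH; rewrite all_cat hw. Qed.

End Words.

Section Blocks.
Variable T : Type.
Implicit Types (u v : seq T) (bs : seq bool).

Lemma blocks_cons u v b bs : blocks u v (b :: bs) = (if b then u else v) ++ blocks u v bs.
Proof. by []. Qed.

Lemma blocks_cat u v bs1 bs2 : blocks u v (bs1 ++ bs2) = blocks u v bs1 ++ blocks u v bs2.
Proof. by rewrite /blocks map_cat flatten_cat. Qed.

Lemma size_blocks u v bs : size u = size v -> size (blocks u v bs) = size bs * size u.
Proof. by move=> h; elim: bs => //= b bs IH; rewrite size_cat IH mulSn; case: b; rewrite ?h. Qed.

Lemma blocks_nseq u v m n bs :
  blocks u v (flatten [seq nseq (if b then m else n) b | b <- bs]) =
  blocks (flatten (nseq m u)) (flatten (nseq n v)) bs.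
Proof.
elim: bs => //= b bs IH; rewrite blocks_cat IH blocks_cons; congr (_ ++ _).
by case: b; [elim: m {IH} | elim: n {IH}] => //= k IHk; rewrite blocks_cons IHk.
Qed.

Lemma all_blocks (a : pred T) u v bs : all a u -> all a v -> all a (blocks u v bs).
Proof. by move=> hu hv; elim: bs => //= b bs IH; rewrite all_cat IH andbT; case: b. Qed.

Definition interleave (cb : bool) bs := cb :: flatten [seq [:: b; cb] | b <- bs].

Lemma size_interleave cb bs : size (interleave cb bs) = (size bs).*2.+1.
Proof. by elim: bs => //= b bs; rewrite /interleave /= => [[->]]; rewrite doubleS. Qed.

Lemma blocks_interleave u v (cb : bool) c1 c2 bs : (if cb then u else v) = c1 ++ c2 ->
  blocks u v (interleave cb bs) = c1 ++ blocks (c2 ++ u ++ c1) (c2 ++ v ++ c1) bs ++ c2.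
Proof.
move=> ec; elim: bs => [|b bs IH]; first by rewrite /interleave /blocks /= cats0 ec.
move: IH; rewrite /interleave /= !blocks_cons ec => ->.
by case: b; rewrite -!catA.
Qed.

End Blocks.

Lemma blocks_inj (T : eqType) (u v : seq T) bs1 bs2 : u != v -> size u = size v ->
  size bs1 = size bs2 -> blocks u v bs1 = blocks u v bs2 -> bs1 = bs2.
Proof.
move=> huv hs; elim: bs1 bs2 => [|b1 bs1 IH] [|b2 bs2] //= [hb]; rewrite !blocks_cons => e.
have e1 : (if b1 then u else v) = (if b2 then u else v).
  by have := congr1 (take (size u)) e; rewrite !take_size_cat //; case: (b1); case: (b2).
rewrite e1 in e; rewrite (IH _ hb (catl_inj e)).
by case: b1 b2 e1 {e} => [] [] // e1; rewrite e1 eqxx in huv.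
Qed.

(** * Bounded languages *)

Section BoundedLanguages.
Variable T : Type.
Implicit Types (w x y : seq T) (ws : seq (seq T)) (ns : seq nat).

Definition powers ns ws := flatten [seq flatten (nseq p.1 p.2) | p <- zip ns ws].

Definition bounded_by ws x := exists ns, size ns = size ws /\ x = powers ns ws.

Lemma bounded_by_nil ws : bounded_by ws [::].
Proof. by exists (nseq (size ws) 0); rewrite size_nseq; split=> //; elim: ws. Qed.

Lemma bounded_by_cat ws1 ws2 x y :
  bounded_by ws1 x -> bounded_by ws2 y -> bounded_by (ws1 ++ ws2) (x ++ y).
Proof.
case=> [n1 [h1 ->]] [n2 [h2 ->]]; exists (n1 ++ n2); rewrite !size_cat h1 h2.
by rewrite /powers zip_cat // map_cat flatten_cat.
Qed.

Lemma bounded_by_catl ws1 ws2 x : bounded_by ws1 x -> bounded_by (ws1 ++ ws2) x.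
Proof. by move/bounded_by_cat => /(_ _ _ (bounded_by_nil ws2)); rewrite cats0. Qed.

Lemma bounded_by_catr ws1 ws2 x : bounded_by ws2 x -> bounded_by (ws1 ++ ws2) x.
Proof. exact: bounded_by_cat (bounded_by_nil ws1). Qed.

Lemma bounded_by_power w n : bounded_by [:: w] (flatten (nseq n w)).
Proof. by exists [:: n]; rewrite /powers /= cats0. Qed.

Lemma bounded_by_map (f : nat -> seq T) l i : i \in l -> bounded_by (map f l) (f i).
Proof.
case/splitPr=> l1 l2; rewrite map_cat /=; apply: bounded_by_catr; rewrite -cat1s.
by apply: bounded_by_catl; have := bounded_by_power (f i) 1; rewrite /= cats0.
Qed.

Lemma prefix_power w n x y : x ++ y = flatten (nseq n w) ->
  exists e i, i < (size w).+1 /\ x = flatten (nseq e w) ++ take i w.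
Proof.
elim: n x y => [|n IH] x y /=; first by case: x => // _; exists 0, 0; rewrite take0.
case: (leqP (size x) (size w)) => hs e.
  have [m [-> _]] := cat_eq_cat e hs.
  by exists 0, (size x); rewrite take_size_cat // size_cat ltnS leq_addr.
have [x' [-> /esym /IH [k [i [hi ->]]]]] := cat_eq_cat (esym e) (ltnW hs).
by exists k.+1, i; rewrite catA.
Qed.

Lemma suffix_power w n x y : x ++ y = flatten (nseq n w) ->
  exists e i, i < (size w).+1 /\ y = drop i w ++ flatten (nseq e w).
Proof.
elim: n x y => [|n IH] x y /=.
  by case: x; case: y => // _; exists 0, (size w); rewrite drop_size.
case: (leqP (size x) (size w)) => hs e.
  have [m [-> ->]] := cat_eq_cat e hs.
  by exists n, (size x); rewrite drop_size_cat // size_cat ltnS leq_addr.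
by have [x' [_ /esym /IH]] := cat_eq_cat (esym e) (ltnW hs).
Qed.

Lemma bounded_by_prefixes ws : exists ws', forall x y, bounded_by ws (x ++ y) -> bounded_by ws' x.
Proof.
elim: ws => [|w ws [ws' IH]].
  by exists [::] => x y [ns [/size0nil -> /=]]; case: x => // _; exact: bounded_by_nil.
exists ((w :: [seq take i w | i <- iota 0 (size w).+1]) ++ w :: ws').
move=> x y [[|n ns] []] // [hs] e; case: (leqP (size x) (size (flatten (nseq n w)))) => hx.
  have [m [/esym /prefix_power [k [i [hi ->]]] _]] := cat_eq_cat e hx.
  apply: bounded_by_catl; rewrite -cat1s; apply: bounded_by_cat; first exact: bounded_by_power.
  by apply: bounded_by_map; rewrite mem_iota.
have [x' [-> e']] := cat_eq_cat (esym e) (ltnW hx).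
by apply: bounded_by_catr; rewrite -cat1s; apply: bounded_by_cat (bounded_by_power w n) _;
  apply: (IH x' y); exists ns.
Qed.

Lemma bounded_by_suffixes ws : exists ws', forall x y, bounded_by ws (x ++ y) -> bounded_by ws' y.
Proof.
elim: ws => [|w ws [ws' IH]].
  by exists [::] => x y [ns [/size0nil -> /=]]; case: x; case: y => // _; exact: bounded_by_nil.
exists (([seq drop i w | i <- iota 0 (size w).+1] ++ w :: ws) ++ ws').
move=> x y [[|n ns] []] // [hs] e; case: (leqP (size x) (size (flatten (nseq n w)))) => hx.
  have [m [/esym /suffix_power [k [i [hi ->]]] ->]] := cat_eq_cat e hx.
  apply: bounded_by_catl; rewrite -!catA; apply: bounded_by_cat.
    by apply: bounded_by_map; rewrite mem_iota.
  by rewrite -cat1s; apply: bounded_by_cat (bounded_by_power w k) _; exists ns.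
have [x' [_ e']] := cat_eq_cat (esym e) (ltnW hx).
by apply: bounded_by_catr; apply: (IH x' y); exists ns.
Qed.

Lemma bounded_factors (L : seq T -> Prop) :
  bounded L -> bounded (fun x => exists a b, L (a ++ x ++ b)).
Proof.
case=> ws hws; have [ws1 hsuf] := bounded_by_suffixes ws.
have [ws2 hpre] := bounded_by_prefixes ws1.
by exists ws2 => x [a [b /hws /hsuf /hpre]].
Qed.

Lemma bounded_bigU (I : finType) (L : I -> seq T -> Prop) :
  (forall i, bounded (L i)) -> bounded (fun x => exists i, L i x).
Proof.
move=> hL; suff [ws hws] : exists ws, forall i, i \in enum I -> forall x, L i x -> bounded_by ws x.
  by exists ws => x [i]; apply: hws; rewrite mem_enum.
elim: (enum I) => [|i l [ws IH]]; first by exists [::].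
have [wi hi] := hL i; exists (wi ++ ws) => j; rewrite in_cons => /predU1P[-> x /hi|/IH hj x /hj].
  exact: bounded_by_catl.
exact: bounded_by_catr.
Qed.

Lemma bounded_by_small_exponents ws x : bounded_by ws x ->
  exists ns, [/\ size ns = size ws, all (leq^~ (size x)) ns & x = powers ns ws].
Proof.
case=> ns [hs ->] {x}; elim: ws ns hs => [|w ws IH] [|n ns] //; first by exists [::].
move=> [/IH [ns' [hs' hle e]]].
exists ((if nilp w then 0 else n) :: ns'); split; rewrite /= ?hs' //; last first.
  by rewrite /powers /= -/(powers ns' ws) -e; case: w {hle} => //=; elim: n.
rewrite /powers /= -/(powers ns ws) size_cat; apply/andP; split.
  by case: w {e} => [|a w] //=; rewrite size_flatten /shape map_nseq sumn_nseq /=; lia.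
by apply: sub_all hle => i /leq_trans; apply; rewrite e leq_addl.
Qed.

End BoundedLanguages.

Lemma card_bounded_by (T : eqType) (ws : seq (seq T)) N (s : seq (seq T)) : uniq s ->
  (forall x, x \in s -> bounded_by ws x /\ size x = N) -> size s <= N.+1 ^ size ws.
Proof.
move=> us hs; pose of_exps (v : (size ws).-tuple 'I_N.+1) := powers (map val v) ws.
suff /(uniq_leq_size us) : {subset s <= [seq of_exps v | v in {: (size ws).-tuple 'I_N.+1}]}.
  by rewrite size_map -cardE card_tuple card_ord.
move=> x /hs [/bounded_by_small_exponents [ns [hns hle ex]] hN].
rewrite hN in hle; rewrite {}ex.
have hv : size [seq inord n : 'I_N.+1 | n <- ns] == size ws by rewrite size_map hns.
apply/mapP; exists (Tuple hv); first by rewrite mem_enum.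
rewrite /of_exps /= -map_comp; congr powers; rewrite -[LHS]map_id; apply/esym/eq_in_map.
by move=> n /(allP hle) hn /=; rewrite inordK.
Qed.

Lemma exp_beats_poly a b k : exists M, (a + b * M).+1 ^ k < 2 ^ M.
Proof.
have expk_mono m n : m <= n -> m ^ k <= n ^ k.
  by move=> h; elim: k => // k IH; rewrite !expnS leq_mul.
pose c := a + b + 1; pose s := c * k + 2 * k + 1.
have hs : s < 2 ^ s by apply: ltn_expl.
have hc : c < 2 ^ c by apply: ltn_expl.
exists (2 ^ (2 * s)); have hM : 0 < 2 ^ (2 * s) by rewrite expn_gt0.
have h1 : (a + b * 2 ^ (2 * s)).+1 <= 2 ^ c * 2 ^ (2 * s) by rewrite /c in hc *; nia.
apply: (leq_ltn_trans (expk_mono _ _ h1)); rewrite -expnD -expnM ltn_exp2l //.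
have -> : 2 ^ (2 * s) = 2 ^ s * 2 ^ s by rewrite mul2n -addnn expnD.
by rewrite /s in hs *; nia.
Qed.

Lemma bounded_blocks_free (T : eqType) (L : seq T -> Prop) (u2 X Y : seq T) :
  bounded L -> size X = size Y -> X != Y -> ~ (forall bs, L (u2 ++ blocks X Y bs)).
Proof.
case=> ws hws hs hXY hL; have [M hM] := exp_beats_poly (size u2) (size X) (size ws).
pose g (b : M.-tuple bool) := u2 ++ blocks X Y b.
have g_inj : injective g.
  by move=> b1 b2 /catl_inj /(blocks_inj hXY hs) e; apply/val_inj/e; rewrite !size_tuple.
have : size (map g (enum {: M.-tuple bool})) <= (size u2 + size X * M).+1 ^ size ws.
  apply: card_bounded_by; first by rewrite map_inj_uniq ?enum_uniq.
  move=> _ /mapP [b _ ->]; split; first exact/hws/hL.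
  by rewrite size_cat size_blocks // size_tuple mulnC.
by rewrite size_map -cardE card_tuple card_bool leqNgt hM.
Qed.

Lemma lexle_anti s t : size s = size t -> lexle s t -> lexle t s -> s = t.
Proof.
elim: s t => [|x s IH] [|y t] //= [hs] /orP[lt1|/andP[/eqP e1 l1]] /orP[lt2|/andP[/eqP e2 l2]].
- by have := ltn_trans lt1 lt2; rewrite ltnn.
- by rewrite e2 ltnn in lt1.
- by rewrite e1 ltnn in lt2.
- by rewrite e1 (IH t hs l1 l2).
Qed.

Section DescendingWords.
Variables Ac Ar Ai : finType.
Implicit Types u v : seq (letter Ac Ar Ai).

Lemma desc_cat u v : desc u -> desc v -> desc (u ++ v).
Proof.
move=> du dv; elim: du => [//|u' v' wu _ IH|b v' _ IH].
  by rewrite -catA; exact: desc_wm wu IH.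
by rewrite cat_cons; apply: desc_ret.
Qed.

Lemma wm_desc u : wm u -> desc u.
Proof. by move=> wu; rewrite -(cats0 u); apply: desc_wm wu (desc_nil _ _ _). Qed.

Lemma wm_drop_desc u j : wm u -> desc (drop j u).
Proof.
move=> wu; elim: wu j => [|i|u' v' wu' IHu wv' IHv|a u' b wu' IHu] j.
- exact: desc_nil.
- by case: j => [|j]; [apply/wm_desc/wm_int | exact: desc_nil].
- by rewrite drop_cat; case: ifP => _; [apply: desc_cat (IHu j) (wm_desc wv') | exact: IHv].
- case: j => [|j]; first exact/wm_desc/wm_nest.
  rewrite /= -cats1 drop_cat; case: ifP => _.
    exact: desc_cat (IHu j) (desc_ret _ (desc_nil _ _ _)).
  by case: (j - size u') => [|[|k]] /=; [exact: desc_ret _ (desc_nil _ _ _) | exact: desc_nil..].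
Qed.

End DescendingWords.

(** * Skeletons of flat words *)

Section FlatWords.
Variables (Ac Ar Ai Q G : finType) (A : vpa Ac Ar Ai Q G) (rG : G -> nat) (rQ : Q -> nat).
Local Notation F := (flat Ac Q).
Local Notation conf := (seq G * Q)%type.
Local Notation nu_f := (nu_f A rG rQ).
Local Notation is_rep := (is_rep A rG rQ).
Implicit Types (x y : seq F) (c : conf).

Definition is_state (a : F) : bool := if a is inr (inl _) then true else false.

Definition head_state x : option Q :=
  if x is inr (inl q) :: _ then Some q else None.

Definition skeleton x := (head_state x, [seq a <- x | ~~ is_state a]).

Lemma skeleton_cat x x' y y' : skeleton x = skeleton x' -> skeleton y = skeleton y' ->
  skeleton (x ++ y) = skeleton (x' ++ y').
Proof.
case=> hx fx [hy fy]; rewrite /skeleton !filter_cat fx fy; congr (_, _).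
case: x x' hx fx => [|a x] [|a' x'] //=; first by case: a' => [?|[?|?]].
by case: a => [?|[?|?]].
Qed.

Lemma filter_states x : all is_state x -> [seq a <- x | ~~ is_state a] = [::].
Proof. by elim: x => //= a x IH /andP[-> /IH]. Qed.

Definition tf_letter c (a : F) : conf :=
  match a with
  | inl b => step A c (Call b)
  | inr (inl _) => c
  | inr (inr t) => (c.1, t c.2)
  end.

Definition tf_skeleton (sh : option Q * seq F) : conf :=
  foldl tf_letter (if sh.1 is Some q then ([::], q) else init A) sh.2.

Definition AllFlat x := exists qs ss, x = map FQ qs ++ flatten (map (@segw Ac Q) ss).

Lemma tf_skeletonE qs ss :
  tf A qs ss = tf_skeleton (skeleton (map FQ qs ++ flatten (map (@segw Ac Q) ss))).
Proof.
have segs c : foldl (tf_seg A) c ss =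
              foldl tf_letter c [seq a <- flatten (map (@segw Ac Q) ss) | ~~ is_state a].
  elim: ss c => //= s ss IH c; rewrite filter_cat foldl_cat -IH; congr foldl.
  by case: s => [a|t qs'] //=; rewrite filter_states //; elim: qs'.
rewrite /tf /tf_skeleton /skeleton filter_cat filter_states ?segs; last by elim: qs.
by case: qs => [|q qs] //=; case: ss {segs} => [|[]].
Qed.

Lemma nu_fE x c : nu_f x c <-> AllFlat x /\ is_rep (tf_skeleton (skeleton x)) c.
Proof.
split; first by case=> qs [ss [-> h]]; split; [exists qs, ss | rewrite -tf_skeletonE].
by case=> [[qs [ss ->]] h]; exists qs, ss; rewrite tf_skeletonE.
Qed.

Lemma nu_f_skeleton x x' c : nu_f x c -> AllFlat x' -> skeleton x = skeleton x' -> nu_f x' c.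
Proof. by move/nu_fE=> [_ h] hx' e; apply/nu_fE; rewrite -e. Qed.

Lemma is_rep_functional c c1 c2 : injective rG -> injective rQ ->
  is_rep c c1 -> is_rep c c2 -> c1 = c2.
Proof.
move=> iG iQ [r1 s1 m1] [r2 s2 m2]; have := m1 _ r2 s2; have := m2 _ r1 s1; rewrite /conf_le.
case: ltngtP => //= hs l21 l12.
have /rcons_inj[/(inj_map iG) e1 /iQ e2] : conf_code rG rQ c1 = conf_code rG rQ c2.
  by apply: lexle_anti l12 l21; rewrite !size_rcons !size_map hs.
by case: c1 c2 {r1 s1 m1 r2 s2 m2 hs l12 l21} e1 e2 => ? ? [? ?] /= -> ->.
Qed.

Lemma nu_f_functional x c1 c2 : injective rG -> injective rQ ->
  nu_f x c1 -> nu_f x c2 -> c1 = c2.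
Proof. by move=> iG iQ /nu_fE[_ h1] /nu_fE[_ h2]; exact: is_rep_functional h1 h2. Qed.


Lemma skeleton_FT_states t y : all is_state y -> skeleton (FT t :: y) = (None, [:: FT t]).
Proof. by move=> hy; rewrite /skeleton /= filter_states. Qed.

Lemma skeleton_state_head q y : all is_state y -> skeleton (FQ q :: y) = (Some q, [::]).
Proof. by move=> hy; rewrite /skeleton /= filter_states. Qed.

Definition is_piece x := if x is b :: r then ~~ is_state b && all is_state r else false.

Definition at_boundary x := if x is a :: _ then ~~ is_state a else true.

Lemma pieces_suffix x0 ys P B : all is_state x0 -> all is_piece ys ->
  x0 ++ flatten ys = P ++ B -> at_boundary B ->
  exists ys1 ys2, ys = ys1 ++ ys2 /\ B = flatten ys2.
Proof.
elim: ys x0 P => [|y ys IH] x0 P h0 hys e hB; case: (leqP (size P) (size x0)) => hs.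
- have [[|a m] [ex eB]] := cat_eq_cat (esym e) hs; first by exists [::], [::].
  by move: h0 hB; rewrite ex eB all_cat /= => /and3P[_ ->].
- have [[|b m] [eP e']] := cat_eq_cat e (ltnW hs); last by [].
  by rewrite eP cats0 ltnn in hs.
- have [[|a m] [ex eB]] := cat_eq_cat (esym e) hs; first by exists [::], (y :: ys).
  by move: h0 hB; rewrite ex eB all_cat /= => /and3P[_ ->].
have [[|b m] [eP e']] := cat_eq_cat e (ltnW hs); first by rewrite eP cats0 ltnn in hs.
case: y {e} hys e' => [//|b' r] /= /andP[/andP[_ hr] hys] [_ e'].
have [ys1 [ys2 [-> ->]]] := IH _ _ hr hys e' hB.
by exists ((b' :: r) :: ys1), ys2.
Qed.

Lemma states_prefix x0 ys a d : all is_state x0 -> all is_piece ys ->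
  x0 ++ flatten ys = a ++ d -> all is_state a -> exists m, x0 = a ++ m.
Proof.
move=> h0 hys e ha; case: (leqP (size a) (size x0)) => hs.
  by have [m [-> _]] := cat_eq_cat (esym e) hs; exists m.
have [[|b m] [ea e']] := cat_eq_cat e (ltnW hs); first by rewrite ea cats0 ltnn in hs.
case: ys {e} hys e' => [//|[//|b' r] ys] /= /andP[/andP[hb' _] _] [eb _].
by move: ha; rewrite ea all_cat /= -eb (negbTE hb') andbF.
Qed.

Local Notation S0 := (S0 A rG rQ).
Local Notation S1 := (S1 A rG rQ).
Local Notation tauinvS1 := (tauinvS1 A rG rQ).
Local Notation Flat := (Flat A rG rQ).

Lemma S0_nil : S0 [::].
Proof. by exists [::]; split; [exact: desc_nil | split]. Qed.

Lemma tauinvS1_states t y : tauinvS1 t y -> all is_state y.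
Proof. by case=> w [qs [_ _ _ [_ ->]]]; elim: (behead qs). Qed.

Lemma tauinvS1_suffix_Flat t y s : tauinvS1 t (y ++ s) -> Flat s.
Proof.
case=> w [qs [hw _ [hsz hnth] [_ e]]]; exists (drop (size y).+1 qs), [::]; split=> //.
  exists (drop (size y).+1 w); split; first exact: wm_drop_desc.
  split=> [|i]; first by rewrite !size_drop hsz.
  rewrite size_drop ltn_subRL drop_drop nth_drop addnC; exact: hnth.
by rewrite cats0 -[s](drop_size_cat _ (erefl (size y))) e map_drop; case: (qs).
Qed.

Definition flat_piece x := (exists a, x = [:: FC a]) \/ S1 x.

Definition flat_star x := exists ps, x = flatten ps /\ forall p, p \in ps -> flat_piece p.

Lemma flat_star_cat x y : flat_star x -> flat_star y -> flat_star (x ++ y).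
Proof.
case=> [px [-> hx]] [py [-> hy]]; exists (px ++ py); rewrite flatten_cat; split=> // p.
by rewrite mem_cat => /orP[/hx|/hy].
Qed.

Lemma Flat_cat x y : Flat x -> flat_star y -> Flat (x ++ y).
Proof.
case=> [s0 [px [h0 hx ->]]] [py [-> hy]]; exists s0, (px ++ py); split=> //.
  by move=> p; rewrite mem_cat => /orP[/hx|/hy].
by rewrite flatten_cat catA.
Qed.

Lemma flat_star_Flat x : flat_star x -> Flat x.
Proof. by case=> ps [-> hps]; exists [::], ps; split=> //; exact: S0_nil. Qed.

Lemma Flat_AllFlat x : Flat x -> AllFlat x.
Proof.
case=> s0 [ys [_ hys ->]]; exists s0.
suff [ss ->] : exists ss, flatten ys = flatten (map (@segw Ac Q) ss) by exists ss.
elim: ys hys => [|y ys IH] hys; first by exists [::].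
have [ss ess] := IH (fun z hz => hys z (@mem_behead _ (y :: ys) _ hz)).
case: (hys y (mem_head _ _)) => [[a ->]|[w [qs [_ _ _ ->]]]].
  by exists (SCall a :: ss); rewrite /= ess.
by exists (STau (phi A w) (behead qs) :: ss); rewrite /= ess.
Qed.

Lemma flat_star_blocks u v bs : flat_star u -> flat_star v -> flat_star (blocks u v bs).
Proof.
move=> hu hv; elim: bs => [|b bs IH]; first by exists [::].
by rewrite blocks_cons; apply: flat_star_cat IH; case: b.
Qed.

Lemma skeleton_blocks u v u' v' bs : skeleton u = skeleton u' -> skeleton v = skeleton v' ->
  skeleton (blocks u v bs) = skeleton (blocks u' v' bs).
Proof.
by move=> hu hv; elim: bs => // b bs IH; rewrite !blocks_cons; apply: skeleton_cat; case: b.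
Qed.

(** * Replacing pieces of [RegFlat] by pieces of [Flat] *)

Section Overapproximation.
Variable R : {ffun Q -> Q} -> seq F -> Prop.
Hypothesis R_overapprox : forall t, bounded_overapprox (tauinvS1 t) (R t).

Lemma R_states t r : R t r -> all is_state r.
Proof.
have [_ _ _ _ samePsi] := R_overapprox t; move=> hr; apply/allP=> a ha.
case/splitPr: ha hr => r1 r2 hr.
have /samePsi [y [/tauinvS1_states hy /inPsiP [y1 [y2 [ey _]]]]] :
    exists x, R t x /\ inPsi (a, (size r2).+1) x.
  by exists (r1 ++ a :: r2); split=> //; apply/inPsiP; exists r1, r2.
by move: hy; rewrite ey all_cat /= => /and3P[].
Qed.

Definition reg_piece x := (exists a, x = [:: FC a]) \/ R1 R x.

Lemma reg_piece_is_piece x : reg_piece x -> is_piece x.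
Proof. by case=> [[a ->]|[t [r [/R_states hr ->]]]]. Qed.

Lemma reg_piece_replace p : reg_piece p ->
  exists p', [/\ flat_piece p', skeleton p' = skeleton p & size p' = size p].
Proof.
case=> [[a ->]|[t [r [hr ->]]]]; first by exists [:: FC a]; split=> //; left; exists a.
have [_ _ _ sameLen _] := R_overapprox t.
have [y [hy ey]] : exists y, tauinvS1 t y /\ size y = size r by apply/sameLen; exists r.
exists (FT t :: y); split; [by right | | by rewrite /= ey].
by rewrite !skeleton_FT_states // ?(tauinvS1_states hy) ?(R_states hr).
Qed.

Lemma reg_pieces_replace ps : (forall p, p \in ps -> reg_piece p) ->
  exists x, [/\ flat_star x, skeleton x = skeleton (flatten ps) & size x = size (flatten ps)].
Proof.
elim: ps => [|p ps IH] hps; first by exists [::]; split=> //; exists [::].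
have [x [fx sx zx]] := IH (fun q hq => hps q (@mem_behead _ (p :: ps) _ hq)).
have [p' [fp sp zp]] := reg_piece_replace (hps p (mem_head _ _)).
exists (p' ++ x); split; last by rewrite /= !size_cat zp zx.
  by apply: flat_star_cat fx; exists [:: p']; rewrite /= cats0; split=> // q /[1!inE] /eqP->.
exact: skeleton_cat.
Qed.

Lemma reg_piece_split p1 p2 : reg_piece (p1 ++ p2) -> 0 < size p1 ->
  exists p1' p2', [/\ flat_piece (p1' ++ p2'), skeleton p1' = skeleton p1,
                      skeleton p2' = skeleton p2, size p2' = size p2 & Flat p2'].
Proof.
case: p2 => [|q p2].
  rewrite cats0 => /reg_piece_replace [p' [fp sp _]] _; exists p', [::]; rewrite cats0.
  by split=> //; apply: flat_star_Flat; exists [::].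
case=> [[a]|[t [r [hr]]]]; first by case: p1 => [|? [|? ?]] [].
case: p1 => [//|b p1] [-> er] _; subst r.
have [_ _ _ _ samePsi] := R_overapprox t.
(* [Psi] yields a word of [tauinvS1 t] with [q] at the same distance from its end;
   its suffix from [q] on is in [S0]. *)
have /samePsi [y [hy /inPsiP [y1 [y2 [ey /= [ez]]]]]] :
    exists x, R t x /\ inPsi (q, (size p2).+1) x.
  by exists (p1 ++ q :: p2); split=> //; apply/inPsiP; exists p1, p2.
have := R_states hr; have := tauinvS1_states hy; rewrite ey !all_cat /=.
move=> /and3P[hy1 hq hy2] /and3P[hp1 _ hp2].
exists (FT t :: y1), (q :: y2); split; [by right; rewrite /= -ey | | | by rewrite /= ez |].
- by rewrite !skeleton_FT_states.
- by case: q hq {ey hr hy} => [|[q|]] // _; rewrite !skeleton_state_head.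
- by apply: (@tauinvS1_suffix_Flat t y1); rewrite -ey.
Qed.

Lemma reg_pieces_split ps P S : (forall p, p \in ps -> reg_piece p) ->
  flatten ps = P ++ S -> 0 < size P ->
  exists P' S', [/\ flat_star (P' ++ S'), Flat S', skeleton P' = skeleton P,
                    skeleton S' = skeleton S & size S' = size S].
Proof.
move=> hps /flatten_split h /h [ps1 [p1 [p2 [ps2 [eps hp1 -> ->]]]]] {h}.
have hps' q : q \in ps1 \/ q \in ps2 -> reg_piece q.
  by move=> hq; apply: hps; rewrite eps mem_cat in_cons; case: hq => ->; rewrite ?orbT.
have [X1 [f1 s1 _]] := reg_pieces_replace (fun q hq => hps' q (or_introl hq)).
have [X2 [f2 s2 z2]] := reg_pieces_replace (fun q hq => hps' q (or_intror hq)).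
have hp : reg_piece (p1 ++ p2) by apply: hps; rewrite eps mem_cat mem_head orbT.
have [p1' [p2' [fp sp1 sp2 zp2 Fp2]]] := reg_piece_split hp hp1.
exists (X1 ++ p1'), (p2' ++ X2); split.
- rewrite -catA (catA p1'); apply: flat_star_cat f1 (flat_star_cat _ f2).
  by exists [:: p1' ++ p2']; rewrite /= cats0; split=> // q /[1!inE] /eqP->.
- exact: Flat_cat.
- exact: skeleton_cat.
- exact: skeleton_cat.
- by rewrite !size_cat zp2 z2.
Qed.

Lemma RegFlat_parse x : RegFlat R x ->
  exists x0 ys, [/\ R0 R x0, all is_state x0, forall y, y \in ys -> reg_piece y,
                    all is_piece ys & x = x0 ++ flatten ys].
Proof.
case=> x0 [ys [h0 hys ->]]; exists x0, ys; split=> //.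
- by case: h0 => t [pre /R_states]; rewrite all_cat => /andP[].
- by apply/allP=> y /hys /reg_piece_is_piece.
Qed.

Lemma at_boundary_cat x y : at_boundary x -> at_boundary y -> at_boundary (x ++ y).
Proof. by case: x. Qed.

Lemma RegFlat_pieces P B C : RegFlat R (P ++ B ++ C) -> at_boundary B -> at_boundary C ->
  exists ps, B = flatten ps /\ forall p, p \in ps -> reg_piece p.
Proof.
case/RegFlat_parse=> x0 [ys [_ h0 hys hpieces e]] hB hC.
have [ys1 [ys2 [eys eBC]]] := pieces_suffix h0 hpieces (esym e) (at_boundary_cat hB hC).
have hpieces2 : all is_piece ys2 by move: hpieces; rewrite eys all_cat => /andP[].
have [ys3 [ys4 [eys2 eC]]] := pieces_suffix (x0 := [::]) isT hpieces2 (esym eBC) hC.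
exists ys3; split; first by move: eBC; rewrite eys2 flatten_cat eC => /cat_eq_size_cat [].
by move=> p hp; apply: hys; rewrite eys eys2 !mem_cat hp orbT.
Qed.

Lemma RegFlat_state_prefixes_bounded :
  bounded (fun a => all is_state a /\ exists d, RegFlat R (a ++ d)).
Proof.
have hb t : bounded (fun x => exists a b, R t (a ++ x ++ b)).
  by case: (R_overapprox t) => /bounded_factors.
have [ws hws] := bounded_bigU hb.
exists ws => a [ha [d /RegFlat_parse [x0 [ys [[t [pre hpre]] h0 _ hpieces e]]]]].
have [m ex0] := states_prefix h0 hpieces (esym e) ha.
by apply: hws; exists t, pre, m; rewrite -ex0.
Qed.

(** * Transferring the fooling scheme *)

Section FoolingScheme.
Variables (u2 v2 u v : seq F) (Z : seq F -> Prop) (zs : nat -> seq F).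
Hypotheses (u2_suffix : exists p, u = p ++ u2) (v2_suffix : exists p, v = p ++ v2)
  (size_u2v2 : size u2 = size v2)
  (fool_dom : forall x, fool_set u2 v2 u v Z x -> exists c, nu_f x c)
  (Z_zs : forall n, Z (zs n))
  (zs_linear : exists K N, forall n, N <= n -> size (zs n) <= K * n)
  (fooling : forall n bs, size bs <= n ->
     exists c1 c2, [/\ nu_f (u2 ++ blocks u v bs ++ zs n) c1,
                       nu_f (v2 ++ blocks u v bs ++ zs n) c2 & c1 <> c2])
  (fool_RegFlat : forall x, fool_set u2 v2 u v Z x -> RegFlat R x).

Local Notation start x := (if x then u2 else v2).
Local Notation blk x := (if x then u else v).

Lemma fool_set_word (x : bool) bs n : fool_set u2 v2 u v Z (start x ++ blocks u v bs ++ zs n).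
Proof. by exists (start x), bs, (zs n); split=> //; case: x; [left | right]. Qed.

(* Otherwise every [u2 w] with [w] in [{u, v}^*] is a factor of a word of some bounded [R t]. *)
Lemma not_all_states_blocks : injective rG -> injective rQ -> ~~ all is_state (u ++ v).
Proof.
move=> iG iQ; apply/negP; rewrite all_cat => /andP[hu hv].
case: (eqVneq u2 v2) => [eq_u2v2 | ne_u2v2].
  have [c1 [c2 [h1 h2]]] := fooling (leqnn 0) (bs := [::]).
  by rewrite eq_u2v2 in h1; case; exact: nu_f_functional iG iQ h1 h2.
have u2_gt0 : 0 < size u2.
  rewrite lt0n size_eq0; apply: contraNneq ne_u2v2 => e; apply/eqP.
  by rewrite e; apply/esym/size0nil; rewrite -size_u2v2 e.
have [[pu eu] [pv ev]] := (u2_suffix, v2_suffix).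
have [u_gt0 v_gt0] : 0 < size u /\ 0 < size v.
  by rewrite eu ev !size_cat -size_u2v2 !addn_gt0 u2_gt0 !orbT.
pose X := flatten (nseq (size v) u); pose Y := flatten (nseq (size u) v).
have size_XY : size X = size Y by rewrite !size_flatten /shape !map_nseq !sumn_nseq mulnC.
have ne_XY : X != Y.
  rewrite /X /Y; have [[px ->] [py ->]] := (power_suffix u v_gt0, power_suffix v u_gt0).
  by apply: contra_neq ne_u2v2; rewrite eu ev !catA => /cat_eq_size_cat [].
have u2_states : all is_state u2 by move: hu; rewrite eu all_cat => /andP[].
apply: (bounded_blocks_free (u2 := u2) RegFlat_state_prefixes_bounded size_XY ne_XY) => bs.
split; first by rewrite all_cat u2_states all_blocks // all_power.
by exists (zs 0); rewrite -catA /X /Y -blocks_nseq; exact/fool_RegFlat/(fool_set_word true).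
Qed.

Section Cut.
Variables (cb : bool) (c1 c2 : seq F) (a0 : F).
Hypotheses (cut : blk cb = c1 ++ a0 :: c2) (a0_nonstate : ~~ is_state a0).

Local Notation mid x := ((a0 :: c2) ++ blk x ++ c1).

Lemma mid_pieces (x : bool) :
  exists ps, mid x = flatten ps /\ forall p, p \in ps -> reg_piece p.
Proof.
apply: (@RegFlat_pieces (u2 ++ c1) _ ((a0 :: c2) ++ zs 0)) => //.
have := fool_RegFlat (fool_set_word true [:: cb; x; cb] 0).
by rewrite /blocks /= cut cats0 -!catA.
Qed.

Lemma tail_pieces n :
  exists ps, (a0 :: c2) ++ zs n = flatten ps /\ forall p, p \in ps -> reg_piece p.
Proof.
apply: (@RegFlat_pieces (u2 ++ c1) _ [::]) => //.
by have := fool_RegFlat (fool_set_word true [:: cb] n); rewrite /blocks /= cut !cats0 -!catA.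
Qed.

Lemma new_block (x : bool) : exists X S, [/\ flat_star X, Flat S, exists p, X = p ++ S,
  skeleton X = skeleton (mid x)
  & skeleton S = skeleton (start x ++ c1) /\ size S = size (start x ++ c1)].
Proof.
have [ps [e hps]] := mid_pieces x.
have [p ep] : exists p, mid x = ((a0 :: c2) ++ p) ++ (start x ++ c1).
  by case: x {e}; [case: u2_suffix | case: v2_suffix] => p ->; exists p; rewrite /= -!catA.
rewrite e in ep; have [//|P' [S' [fX FS sP sS zS]]] := reg_pieces_split hps ep.
exists (P' ++ S'), S'; split=> //; first by exists P'.
by rewrite e ep; apply: skeleton_cat.
Qed.

Lemma new_tails : exists zs' : nat -> seq F, forall n,
  [/\ flat_star (zs' n), skeleton (zs' n) = skeleton ((a0 :: c2) ++ zs n)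
     & size (zs' n) = size ((a0 :: c2) ++ zs n)].
Proof.
apply: (choice (fun n z => [/\ flat_star z, skeleton z = skeleton ((a0 :: c2) ++ zs n)
                                 & size z = size ((a0 :: c2) ++ zs n)])) => n.
by have [ps [-> hps]] := tail_pieces n; apply: reg_pieces_replace.
Qed.

Lemma Flat_lfs_cut : contains_lfs Flat nu_f.
Proof.
have [Xu [Su [fXu FSu [pu eXu] sXu [sSu zSu]]]] := new_block true.
have [Xv [Sv [fXv FSv [pv eXv] sXv [sSv zSv]]]] := new_block false.
have [zs' hzs'] := new_tails.
pose new_start (x : bool) := if x then Su else Sv.
have new_word (x : bool) bs n : Flat (new_start x ++ blocks Xu Xv bs ++ zs' n) /\
    skeleton (start x ++ blocks u v (interleave cb bs) ++ zs n) =
    skeleton (new_start x ++ blocks Xu Xv bs ++ zs' n).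
  have [fz sz _] := hzs' n; split.
    by apply: Flat_cat; [case: x | exact: flat_star_cat (flat_star_blocks _ fXu fXv) fz].
  rewrite (blocks_interleave _ cut) -!catA catA; apply: skeleton_cat; first by case: x.
  by apply: skeleton_cat (esym sz); apply: skeleton_blocks; rewrite ?sXu ?sXv.
have transfer (x : bool) bs n c : nu_f (start x ++ blocks u v (interleave cb bs) ++ zs n) c ->
    nu_f (new_start x ++ blocks Xu Xv bs ++ zs' n) c.
  by have [fl sk] := new_word x bs n; move/nu_f_skeleton; apply; [exact: Flat_AllFlat | exact: sk].
have new_start_cases y : y = Su \/ y = Sv -> exists x : bool, y = new_start x.
  by case=> ->; [exists true | exists false].
exists Su, Sv, Xu, Xv, (fun z => exists n, z = zs' n.*2.+1); split; last first.
  by move=> _ [y [bs [_ [/new_start_cases [x ->] [[n ->] ->]]]]]; exact: (new_word x bs _).1.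
split; [by exists pu | by exists pv | by rewrite zSu zSv !size_cat size_u2v2 | | ].
  move=> _ [y [bs [_ [/new_start_cases [x ->] [[n ->] ->]]]]].
  by have [c /transfer] := fool_dom (fool_set_word x (interleave cb bs) n.*2.+1); exists c.
exists (fun n => zs' n.*2.+1); split; first by move=> n; exists n.
  have [K [N hK]] := zs_linear; exists ((size c2).+1 + 3 * K), N.+1 => n hn.
  have [_ _ ->] := hzs' n.*2.+1; have := hK n.*2.+1; rewrite size_cat /= -addnn; nia.
move=> n bs hbs; have [|d1 [d2 [h1 h2 ne]]] := fooling (n := n.*2.+1) (bs := interleave cb bs).
  by rewrite size_interleave ltnS leq_double.
by exists d1, d2; split=> //; [exact: (transfer true) | exact: (transfer false)].
Qed.

End Cut.

Lemma Flat_lfs_nonstate : ~~ all is_state (u ++ v) -> contains_lfs Flat nu_f.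
Proof.
rewrite all_cat negb_and => mixed.
have [cb [w [ew /allPn [a0 a0w a0_nonstate]]]] :
    exists (cb : bool) w, blk cb = w /\ ~~ all is_state w.
  by case/orP: mixed; [exists true, u | exists false, v].
by move: ew; case/splitPr: a0w => c1 c2 ew; exact: Flat_lfs_cut ew a0_nonstate.
Qed.

End FoolingScheme.

End Overapproximation.

End FlatWords.

Theorem proposition14 (Ac Ar Ai Q G : finType) (A : vpa Ac Ar Ai Q G)
    (rG : G -> nat) (rQ : Q -> nat) :
  injective rG -> injective rQ ->
  0 < #|Ac| -> 0 < #|Ar| ->
  (exists w, acc A (init A) w) -> (exists w, ~~ acc A (init A) w) ->
  bounded (S0 A rG rQ) ->
  forall R : {ffun Q -> Q} -> seq (flat Ac Q) -> Prop,
    (forall t, bounded_overapprox (tauinvS1 A rG rQ t) (R t)) ->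
    contains_lfs (RegFlat R) (nu_f A rG rQ) ->
    contains_lfs (Flat A rG rQ) (nu_f A rG rQ).
Proof.
move=> iG iQ _ _ _ _ _ R hR [u2 [v2 [u [v [Z [[hu hv hsz hdom [zs [hZ hlin hfool]]] hsub]]]]]].
apply: (Flat_lfs_nonstate hR hu hv hsz hdom hZ hlin hfool hsub).
exact: (not_all_states_blocks hR hu hv hsz hZ hfool hsub iG iQ).
Qed.
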